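(* Let $a>0$, $\alpha\in[0,1)$ and $f\in\mathcal C_a$. Then $\mathrm{Sh}_\alpha(\mathrm{gr}(f))=\mathrm{gr}(\mathrm{Sh}_\alpha(f))$.
   Context: $\mathcal C_a$ is the set of $C^1$ functions $f:\mathbb R\to\mathbb R$ that are even, satisfy $f(s)=|s|$ for $|s|\ge a$ and are strictly convex on $[-a,a]$. Shaking of functions: for $f\in\mathcal C_a$ and $\alpha\in[0,1)$, put $F_\alpha(s)=f(s)-\alpha s$, $x_\alpha^+=(f')^{-1}(\alpha)\in[0,a)$ (inverse of $f':[-a,a]\to[-1,1]$); $F_\alpha$ decreases on $(-\infty,x_\alpha^+]$ and increases on $[x_\alpha^+,\infty)$. Let $F_\alpha^{-1}$ be the inverse of $F_\alpha|_{[x_\alpha^+,\infty)}$, $\phi=F_\alpha^{-1}\circ F_\alpha$, $\delta_x=(1-\alpha)^{-1}F_\alpha(x)-\phi(x)$, $s_\alpha=x_\alpha^++\delta_{x_\alpha^+}$; $x\mapsto x+\delta_x$ is an increasing bijection $(-\infty,x_\alpha^+]\to(-\infty,s_\alpha]$ with inverse $\tau$. Define $\mathrm{Sh}_\alpha(f)(x)=\alpha x+F_\alpha(\tau(x))$ for $x\le s_\alpha$ and $=x$ for $x>s_\alpha$. Graphs: let $\mathcal P$ be the set of continuous $g:\mathbb R\to\mathbb R$ with $g(x)\ge|x|$ for all $x$, $g(x)=|x|$ for $|x|$ large, and $g(x_0)\ne|x_0|$ for some $x_0$. For $g\in\mathcal P$ let $a_g=\inf\{x:g(x)\ne|x|\}$,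 $b_g=\sup\{x:g(x)\ne|x|\}$ and $\mathrm{gr}(g)=\{(x,y)\in[a_g,b_g]\times\mathbb R_{\ge0}:|x|\le y\le g(x)\}$ (both $f$ and $\mathrm{Sh}_\alpha(f)$ lie in $\mathcal P$). Shaking of sets: let $D$ be the line $y=-x$ and $v_\alpha$ the unit vector positively collinear to $(1,\alpha)$. For compact $K\subseteq\mathbb R^2$, $\mathrm{Sh}_\alpha(K)=\bigcup_{p\in D}K^p$, where $K^p=\emptyset$ if $K\cap(p+\mathbb Rv_\alpha)=\emptyset$ and otherwise $K^p$ is the segment from $p$ to $p+|K\cap(p+\mathbb Rv_\alpha)|\,v_\alpha$, $|\cdot|$ denoting one-dimensional Lebesgue measure on the line. *)

From HB Require Import structures.
From mathcomp Require Import all_boot all_order all_algebra.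
From mathcomp Require Import all_classical all_reals all_analysis.
Set Implicit Arguments. Unset Strict Implicit. Unset Printing Implicit Defensive.
Import Order.TTheory GRing.Theory Num.Theory.
Import numFieldNormedType.Exports.
Local Open Scope classical_set_scope.
Local Open Scope ring_scope.

Section Shaking.
Variable R : realType.

Definition in_Ca (a : R) (f : R -> R) : Prop :=
  (forall x, derivable f x 1) /\ continuous (derive1 f) /\
  (forall s, f (- s) = f s) /\
  (forall s, a <= `|s| -> f s = `|s|) /\
  (forall x y t, - a <= x -> x < y -> y <= a -> 0 < t -> t < 1 ->
     f (t * x + (1 - t) * y) < t * f x + (1 - t) * f y).

Definition Fa (alpha : R) (f : R -> R) (s : R) : R := f s - alpha * s.

(* x_alpha^+ = (f')^{-1}(alpha), inverse of f' : [-a,a] -> [-1,1] *)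
Definition xplus (a alpha : R) (f : R -> R) : R :=
  xget 0 [set x | - a <= x <= a /\ derive1 f x = alpha].

Definition Finv (a alpha : R) (f : R -> R) (y : R) : R :=
  xget 0 [set x | xplus a alpha f <= x /\ Fa alpha f x = y].

Definition phi (a alpha : R) (f : R -> R) (x : R) : R :=
  Finv a alpha f (Fa alpha f x).

Definition delta (a alpha : R) (f : R -> R) (x : R) : R :=
  (1 - alpha)^-1 * Fa alpha f x - phi a alpha f x.

Definition salpha (a alpha : R) (f : R -> R) : R :=
  xplus a alpha f + delta a alpha f (xplus a alpha f).

(* tau : inverse of x |-> x + delta_x, (-oo, x^+] -> (-oo, s_alpha] *)
Definition tau (a alpha : R) (f : R -> R) (y : R) : R :=
  xget 0 [set x | x <= xplus a alpha f /\ x + delta a alpha f x = y].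

Definition Sh_fun (a alpha : R) (f : R -> R) (x : R) : R :=
  if x <= salpha a alpha f then alpha * x + Fa alpha f (tau a alpha f x)
  else x.

Definition a_g (g : R -> R) : R := inf [set x | g x <> `|x|].
Definition b_g (g : R -> R) : R := sup [set x | g x <> `|x|].

Definition gr (g : R -> R) : set (R * R) :=
  [set p | a_g g <= p.1 <= b_g g /\ 0 <= p.2 /\ `|p.1| <= p.2 <= g p.1].

Definition v_alpha (alpha : R) : R * R :=
  ((Num.sqrt (1 + alpha ^+ 2))^-1, alpha / Num.sqrt (1 + alpha ^+ 2)).

Definition D_line : set (R * R) := [set p | p.2 = - p.1].

Definition pt_line (p v : R * R) (s : R) : R * R := (p.1 + s * v.1, p.2 + s * v.2).

(* one-dimensional Lebesgue measure of K ∩ (p + R v), via the isometric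
   (v is a unit vector) parametrisation s |-> p + s v of the line *)
Definition line_measure (K : set (R * R)) (p v : R * R) : R :=
  fine (@lebesgue_measure R [set s : R | K (pt_line p v s)]).

Definition Kp (alpha : R) (K : set (R * R)) (p : R * R) : set (R * R) :=
  let v := v_alpha alpha in
  if `[< exists s, K (pt_line p v s) >] then
    [set q | exists2 s, 0 <= s <= line_measure K p v & q = pt_line p v s]
  else set0.

Definition Sh_set (alpha : R) (K : set (R * R)) : set (R * R) :=
  \bigcup_(p in D_line) Kp alpha K p.

End Shaking.

From HB Require Import structures.
From mathcomp Require Import all_boot all_order all_algebra.
From mathcomp Require Import all_classical all_reals all_analysis.
From mathcomp Require Import ring lra.
Import Order.TTheory GRing.Theory Num.Theory.
Import numFieldNormedType.Exports.
Local Open Scope classical_set_scope.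
Local Open Scope ring_scope.

(* Write F = f - al x.  It is strictly convex with minimum m > 0 at x^+, and
   for c >= m the equation F = c has one root U c <= x^+ and one root W c >= x^+
   (W = F_alpha^{-1}).  The line y = al x + c meets D at abscissa -c/(1+al),
   and meets gr f along the x of [-c/(1+al), c/(1-al)] (where |x| <= al x + c)
   with c <= F x: the whole interval if c <= m, the interval minus the gap
   (U c, W c) if c > m.  Shaking replaces this section by a segment of the
   same length starting on D, which therefore ends at abscissa c/(1-al) if
   c <= m and at U c + c/(1-al) - W c = U c + delta (U c) otherwise.  On the
   other hand, (x, al x + c) lies under the graph of Sh_alpha f iff
   c <= F (tau x); since F decreases left of x^+ and tau inverts the
   increasing map u |-> u + delta u, this says exactly that x lies left of
   the same endpoint. *)

Section RealPreliminaries.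
Context {R : realType}.
Implicit Types (g : R -> R) (x y z c K e : R).

Lemma derive1_quotient g x : derivable g x 1 ->
  (fun h => h^-1 * (g (h + x) - g x)) @ 0^' --> derive1 g x.
Proof.
move=> /cvg_ex[l hl]; rewrite derive1E /derive (cvg_lim _ hl) //.
apply: cvg_trans hl; apply: near_eq_cvg; near=> h.
by rewrite /= -[h *: _]/(h * 1) mulr1.
Unshelve. all: by end_near. Qed.

Lemma derive1_le_right g x K e : derivable g x 1 -> 0 < e ->
  (forall h, 0 < h -> h < e -> g (h + x) - g x <= K * h) -> derive1 g x <= K.
Proof.
move=> /derive1_quotient/cvg_dnbhs_at_right hQ e0 hK; apply: (cvgr_to_le hQ).
near=> h; rewrite mulrC ler_pdivrMr; last by near: h; exact: nbhs_right_gt.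
by apply: hK; near: h; [exact: nbhs_right_gt | exact: nbhs_right_lt].
Unshelve. all: by end_near. Qed.

Lemma derive1_ge_right g x K e : derivable g x 1 -> 0 < e ->
  (forall h, 0 < h -> h < e -> K * h <= g (h + x) - g x) -> K <= derive1 g x.
Proof.
move=> /derive1_quotient/cvg_dnbhs_at_right hQ e0 hK; apply: (cvgr_to_ge hQ).
near=> h; rewrite mulrC ler_pdivlMr; last by near: h; exact: nbhs_right_gt.
by apply: hK; near: h; [exact: nbhs_right_gt | exact: nbhs_right_lt].
Unshelve. all: by end_near. Qed.

Lemma derive1_ge_left g x K e : derivable g x 1 -> 0 < e ->
  (forall h, - e < h -> h < 0 -> g (h + x) - g x <= K * h) -> K <= derive1 g x.
Proof.
move=> /derive1_quotient/cvg_dnbhs_at_left hQ e0 hK; apply: (cvgr_to_ge hQ).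
near=> h; rewrite mulrC ler_ndivlMr; last by near: h; exact: nbhs_left_lt.
apply: hK; near: h; last exact: nbhs_left_lt.
by apply: nbhs_left_gt; rewrite ltrNl oppr0.
Unshelve. all: by end_near. Qed.

Lemma derive1_le_left g x K e : derivable g x 1 -> 0 < e ->
  (forall h, - e < h -> h < 0 -> K * h <= g (h + x) - g x) -> derive1 g x <= K.
Proof.
move=> /derive1_quotient/cvg_dnbhs_at_left hQ e0 hK; apply: (cvgr_to_le hQ).
near=> h; rewrite mulrC ler_ndivrMr; last by near: h; exact: nbhs_left_lt.
apply: hK; near: h; last exact: nbhs_left_lt.
by apply: nbhs_left_gt; rewrite ltrNl oppr0.
Unshelve. all: by end_near. Qed.

Lemma nondecreasing_continuous_at g x :
  (forall y z, y <= z -> g y <= g z) ->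
  (forall e, 0 < e -> exists2 y, y < x & g x - e < g y) ->
  (forall e, 0 < e -> exists2 z, x < z & g z < g x + e) ->
  {for x, continuous g}.
Proof.
move=> gmono hl hr; apply/cvgrPdist_lt => e e0.
have [y yx gy] := hl e e0; have [z xz gz] := hr e e0.
have : x \in `]y, z[ by rewrite in_itv /= yx xz.
move=> /near_in_itvoo; apply: filterS => t; rewrite in_itv /= => /andP[yt tz].
have := gmono _ _ (ltW yt); have := gmono _ _ (ltW tz).
have := gmono _ _ (ltW yx); have := gmono _ _ (ltW xz).
by move=> *; rewrite ltr_norml; apply/andP; split; lra.
Qed.

Lemma lebesgue_measure_itvcc x y : x <= y ->
  lebesgue_measure `[x, y] = (y - x)%:E.
Proof.
move=> xy; rewrite lebesgue_measure_itv /= lte_fin.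
case: ltrP => // yx.
have -> : x = y by apply/eqP; rewrite eq_le xy yx.
by rewrite subrr.
Qed.

Lemma lebesgue_measure_itvcc_setU x y z t : x <= y -> y < z -> z <= t ->
  lebesgue_measure (`[x, y] `|` `[z, t]) = ((y - x) + (t - z))%:E.
Proof.
move=> xy yz zt; rewrite measureU //= ?lebesgue_measure_itvcc //.
apply/seteqP; split => s //= [] /=; rewrite !in_itv /= => /andP[_ sy] /andP[zs _].
by have := le_lt_trans sy yz; have := lt_le_trans yz zs; lra.
Qed.

Lemma oppr_pinvM_le z c x : 0 < z -> (- (z^-1 * c) <= x) = (0 <= z * x + c).
Proof.
move=> z0; rewrite lerNl ler_pdivlMl // mulrN.
by apply/idP/idP; lra.
Qed.

Lemma ler_oppr_pinvM z c x : 0 < z -> (x <= - (z^-1 * c)) = (z * x + c <= 0).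
Proof.
move=> z0; rewrite lerNr ler_pdivrMl // mulrN.
by apply/idP/idP; lra.
Qed.

Lemma preimage_affine_itvcc z p u v : 0 < z ->
  [set s | [set` `[u, v]] (p + s / z)] = [set` `[z * (u - p), z * (v - p)]].
Proof.
move=> z0; apply/seteqP; split=> s /=; rewrite !in_itv /=.
all: rewrite -(lerBlDl u p) -(lerBrDl _ v p) ler_pdivlMr // ler_pdivrMr //.
all: by rewrite ![_ * z]mulrC.
Qed.

Lemma preimage_affine_itvcc_setU z p u v u' v' : 0 < z ->
  [set s | ([set` `[u, v]] `|` [set` `[u', v']]) (p + s / z)] =
  [set` `[z * (u - p), z * (v - p)]] `|` [set` `[z * (u' - p), z * (v' - p)]].
Proof. by move=> z0; rewrite -!preimage_affine_itvcc. Qed.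

End RealPreliminaries.

Definition strictly_convex_on {R : realType} (l r : R) (g : R -> R) :=
  forall x y t, l <= x -> x < y -> y <= r -> 0 < t -> t < 1 ->
    g (t * x + (1 - t) * y) < t * g x + (1 - t) * g y.

Section StrictConvexity.
Context {R : realType} {l r : R} {g : R -> R}.
Hypothesis gcvx : strictly_convex_on l r g.

Lemma convex_on_le x y t : l <= x <= r -> l <= y <= r -> 0 <= t <= 1 ->
  g (t * x + (1 - t) * y) <= t * g x + (1 - t) * g y.
Proof.
move=> /andP[lx xr] /andP[ly yr] /andP[t0 t1].
have [->|tn0] := eqVneq t 0; first by rewrite !mul0r !add0r subr0 !mul1r.
have [->|tn1] := eqVneq t 1; first by rewrite subrr !mul0r !addr0 !mul1r.
have t0' : 0 < t by rewrite lt_neqAle eq_sym tn0.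
have t1' : t < 1 by rewrite lt_neqAle tn1.
have [xy|yx|<-] := ltgtP x y.
- exact/ltW/gcvx.
- have := @gcvx y x (1 - t) ly yx xr ltac:(lra) ltac:(lra).
  rewrite (_ : 1 - (1 - t) = t); last by ring.
  by rewrite addrC [_ * g y + _]addrC => /ltW.
- by rewrite -mulrDl subrKC !mul1r -mulrDl subrKC mul1r.
Qed.

Lemma strictly_convex_on_subr_linear c :
  strictly_convex_on l r (fun s => g s - c * s).
Proof.
move=> x y t lx xy yr t0 t1; have := gcvx x y t lx xy yr t0 t1.
have : c * (t * x + (1 - t) * y) = t * (c * x) + (1 - t) * (c * y) by ring.
lra.
Qed.

Lemma convex_lt_right x0 y z : l <= x0 -> x0 <= y -> y < z -> z <= r ->
  g x0 < g z -> g y < g z.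
Proof.
move=> lx xy yz zr gxz; set t := (z - y) / (z - x0).
have zx : 0 < z - x0 by lra.
have t0 : 0 < t by apply: divr_gt0; lra.
have t1 : t <= 1 by rewrite ler_pdivrMr // mul1r; lra.
have := convex_on_le x0 z t ltac:(lra) ltac:(lra) ltac:(lra).
rewrite (_ : t * x0 + (1 - t) * z = y); last by rewrite /t; field; exact: lt0r_neq0.
have : t * g x0 < t * g z by rewrite ltr_pM2l.
lra.
Qed.

Lemma convex_lt_left x0 y z : l <= y -> y < z -> z <= x0 -> x0 <= r ->
  g x0 < g y -> g z < g y.
Proof.
move=> ly yz zx xr gxy; set t := (x0 - z) / (x0 - y).
have xy : 0 < x0 - y by lra.
have t0 : 0 <= t by apply: divr_ge0; lra.
have t1 : t < 1 by rewrite ltr_pdivrMr // mul1r; lra.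
have := convex_on_le y x0 t ltac:(lra) ltac:(lra) ltac:(lra).
rewrite (_ : t * y + (1 - t) * x0 = z); last by rewrite /t; field; exact: lt0r_neq0.
have : (1 - t) * g x0 < (1 - t) * g y by rewrite ltr_pM2l // subr_gt0.
lra.
Qed.

Lemma derive1_mul_sub_le x z : derivable g x 1 -> l <= x <= r -> l <= z <= r ->
  derive1 g x * (z - x) <= g z - g x.
Proof.
move=> gx hx hz; set K := (g z - g x) / (z - x).
have secant h : 0 < h / (z - x) -> h / (z - x) < 1 -> g (h + x) - g x <= K * h.
  set s := h / (z - x) => s0 s1.
  have := convex_on_le z x s hz hx; rewrite (ltW s0) (ltW s1) => /(_ isT).
  have zx : z - x != 0 by apply: contraTneq s0; rewrite /s => ->; rewrite invr0 mulr0 ltxx.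
  rewrite (_ : s * z + (1 - s) * x = h + x); last by rewrite /s; field.
  rewrite (_ : K * h = s * (g z - g x)); last by rewrite /K /s; field.
  lra.
have [xz|zx|<-] := ltgtP x z; last by rewrite !subrr mulr0.
- rewrite -ler_pdivlMr ?subr_gt0 //; apply: (derive1_le_right g x _ (z - x) gx).
    by rewrite subr_gt0.
  move=> h h0 hz'; apply: secant; first by rewrite divr_gt0 ?subr_gt0.
  by rewrite ltr_pdivrMr ?subr_gt0 // mul1r.
- rewrite -ler_ndivrMr ?subr_lt0 //; apply: (derive1_ge_left g x _ (x - z) gx).
    by rewrite subr_gt0.
  move=> h hz' h0; apply: secant.
    by rewrite -mulrNN -invrN divr_gt0 ?oppr_gt0 ?subr_lt0.
  by rewrite ltr_ndivrMr ?subr_lt0 // mul1r; lra.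
Qed.

Lemma tangent_lt x y : derivable g x 1 -> l <= x <= r -> l <= y <= r -> y != x ->
  g x + derive1 g x * (y - x) < g y.
Proof.
move=> gx hx hy yx; set z := (x + y) / 2.
have hz : l <= z <= r by rewrite /z; lra.
have mid : g z < (g x + g y) / 2.
  have [xy|{}yx|exy] := ltgtP x y; last by move: yx; rewrite exy eqxx.
  + have := @gcvx x y (1/2) ltac:(lra) xy ltac:(lra) ltac:(lra) ltac:(lra).
    rewrite (_ : 1 / 2 * x + (1 - 1 / 2) * y = z); last by rewrite /z; field.
    lra.
  + have := @gcvx y x (1/2) ltac:(lra) yx ltac:(lra) ltac:(lra) ltac:(lra).
    rewrite (_ : 1 / 2 * y + (1 - 1 / 2) * x = z); last by rewrite /z; field.
    lra.
have := derive1_mul_sub_le x z gx hx hz.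
have -> : z - x = (y - x) / 2 by rewrite /z; field.
by rewrite mulrA; lra.
Qed.

Lemma derive1_lt x y : (forall s, derivable g s 1) -> l <= x -> x < y -> y <= r ->
  derive1 g x < derive1 g y.
Proof.
move=> gd lx xy yr.
have hx : l <= x <= r by apply/andP; split; lra.
have hy : l <= y <= r by apply/andP; split; lra.
have t1 := tangent_lt x y (gd x) hx hy (negbT (gt_eqF xy)).
have t2 := tangent_lt y x (gd y) hy hx (negbT (lt_eqF xy)).
have : 0 < (derive1 g y - derive1 g x) * (y - x).
  have : derive1 g y * (x - y) = - (derive1 g y * (y - x)) by ring.
  rewrite mulrBl; lra.
by rewrite pmulr_lgt0 ?subr_gt0 // subr_gt0.
Qed.

End StrictConvexity.

Lemma gr_itvE {R : realType} (g : R -> R) (l r : R) : l < r ->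
  [set x | g x <> `|x|] = [set` `]l, r[] ->
  gr g = [set p | l <= p.1 <= r /\ 0 <= p.2 /\ `|p.1| <= p.2 <= g p.1].
Proof.
by move=> lr gE; rewrite /gr /a_g /b_g gE inf_itv ?sup_itv ?bnd_simp.
Qed.

Section ShakingGraph.
Variables (R : realType) (a al : R) (f : R -> R).
Hypotheses (a0 : 0 < a) (al0 : 0 <= al) (al1 : al < 1).
Hypothesis fd : forall x, derivable f x 1.
Hypothesis fdc : continuous (derive1 f).
Hypothesis fout : forall s, a <= `|s| -> f s = `|s|.
Hypothesis fcvx : strictly_convex_on (- a) a f.

Local Ltac lra_a :=
  repeat (apply/andP; split); have := a0; have := al0; have := al1; lra.
Local Ltac nra_a := have := a0; have := al0; have := al1; nra.

Lemma f_right s : a <= s -> f s = s.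
Proof. by move=> aS; rewrite fout ger0_norm //; lra_a. Qed.

Lemma f_left s : s <= - a -> f s = - s.
Proof. by move=> sa; rewrite fout ler0_norm //; lra_a. Qed.

Lemma f_a : f a = a.
Proof. exact: f_right. Qed.

Lemma f_Na : f (- a) = a.
Proof. by rewrite f_left ?opprK. Qed.

Lemma derive1_f_a : derive1 f a = 1.
Proof.
have fE h : 0 < h -> f (h + a) - f a = 1 * h by move=> h0; rewrite f_a f_right; lra_a.
apply/eqP; rewrite eq_le (derive1_le_right f a 1 1 (fd a) ltr01).
  by rewrite (derive1_ge_right f a 1 1 (fd a) ltr01) // => h h0 _; rewrite fE.
by move=> h h0 _; rewrite fE.
Qed.

Lemma derive1_f_Na : derive1 f (- a) = -1.
Proof.
have fE h : h < 0 -> f (h - a) - f (- a) = -1 * h.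
  by move=> h0; rewrite f_Na f_left; lra_a.
apply/eqP; rewrite eq_le (derive1_le_left f (- a) (-1) 1 (fd (- a)) ltr01).
  by rewrite (derive1_ge_left f (- a) (-1) 1 (fd (- a)) ltr01) // => h _ h0; rewrite fE.
by move=> h _ h0; rewrite fE.
Qed.

Lemma f_gt_abs x : - a < x < a -> `|x| < f x.
Proof.
move=> /andP[ax xa]; have hx : - a <= x <= a by lra_a.
have := tangent_lt fcvx a x (fd a) ltac:(lra_a) hx (negbT (lt_eqF xa)).
have := tangent_lt fcvx (- a) x (fd (- a)) ltac:(lra_a) hx (negbT (gt_eqF ax)).
rewrite f_a derive1_f_a f_Na derive1_f_Na.
by case: (lerP 0 x) => x0; [rewrite ger0_norm | rewrite ltr0_norm]; lra_a.
Qed.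

Lemma f_ge_abs x : `|x| <= f x.
Proof.
have [ax|xa] := lerP a `|x|; first by rewrite fout.
by apply/ltW/f_gt_abs; move: xa; rewrite ltr_norml.
Qed.

Lemma f_eq_abs x : f x = `|x| <-> x <= - a \/ a <= x.
Proof.
split=> [fx|[xa|ax]].
- have [|ax] := lerP x (- a); first by left.
  have [|xa] := lerP a x; first by right.
  by have := @f_gt_abs x ltac:(lra_a); rewrite fx ltxx.
- by rewrite f_left ?ler0_norm //; lra_a.
- by rewrite f_right ?ger0_norm //; lra_a.
Qed.

Lemma f_cont : continuous f.
Proof. by move=> x; apply/differentiable_continuous/derivable1_diffP/fd. Qed.

Lemma f_sub_le w2 w1 : - a <= w2 -> w2 < w1 -> f w1 - f w2 <= w1 - w2.
Proof.
move=> aw2 w21; have g2 := f_ge_abs w2; have n2 := ler_norm w2.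
have [w1a|aw1] := lerP w1 a; last first.
  rewrite (f_right w1 (ltW aw1)); have [aw2'|] := lerP a w2; last lra_a.
  by rewrite f_right //; lra_a.
set t := (a - w1) / (a - w2).
have ht : 0 <= t <= 1.
  rewrite /t divr_ge0 ?ler_pdivrMr /=; lra_a.
have := convex_on_le fcvx w2 a t ltac:(lra_a) ltac:(lra_a) ht.
rewrite (_ : t * w2 + (1 - t) * a = w1) ?f_a; last by rewrite /t; field; lra_a.
have : (1 - t) * (a - f w2) <= (1 - t) * (a - w2) by rewrite ler_wpM2l; lra_a.
have : (1 - t) * (a - w2) = w1 - w2 by rewrite /t; field; lra_a.
have : t * f w2 + (1 - t) * a - f w2 = (1 - t) * (a - f w2) by ring.
lra_a.
Qed.

Local Notation xp := (xplus a al f).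
Local Notation F := (Fa al f).
Local Notation m := (F xp).

Lemma xplus_spec : - a < xp < a /\ derive1 f xp = al.
Proof.
have [c hc dc] : exists2 c, c \in `[- a, a] & derive1 f c = al.
  apply: IVT; [lra_a | exact: continuous_subspaceT |].
  by rewrite derive1_f_a derive1_f_Na ge_min le_max; lra_a.
move: hc; rewrite in_itv /= => /andP[ac ca].
have -> : xp = c.
  apply: xget_unique => [|y [/andP[ay ya] dy]]; first by split=> //; rewrite ac ca.
  apply/eqP.
  have [yc|cy|] // := ltgtP y c.
  - by have := derive1_lt fcvx y c fd ay yc ca; lra_a.
  - by have := derive1_lt fcvx c y fd ac cy ya; lra_a.
split=> //; apply/andP; split; rewrite lt_neqAle ?ac ?ca andbT.
- by apply/eqP => ac'; move: dc; rewrite -ac' derive1_f_Na; lra_a.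
- by apply/eqP => ca'; move: dc; rewrite ca' derive1_f_a; lra_a.
Qed.

Lemma xplus_in : - a < xp < a.
Proof. by case: xplus_spec. Qed.

Lemma derive1_f_xplus : derive1 f xp = al.
Proof. by case: xplus_spec. Qed.

Lemma F_cont : continuous F.
Proof.
move=> x; apply: continuousB; first exact: f_cont.
by apply: continuousM; [exact: cvg_cst | exact: cvg_id].
Qed.

Lemma F_right s : a <= s -> F s = (1 - al) * s.
Proof. by move=> aS; rewrite /Fa f_right //; ring. Qed.

Lemma F_left s : s <= - a -> F s = - (1 + al) * s.
Proof. by move=> sa; rewrite /Fa f_left //; ring. Qed.

Lemma F_a : F a = (1 - al) * a.
Proof. exact: F_right. Qed.

Lemma F_Na : F (- a) = (1 + al) * a.
Proof. by rewrite F_left // mulNr mulrN opprK. Qed.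

Lemma F_gt_min_in y : - a <= y <= a -> y != xp -> m < F y.
Proof.
move=> hy yx; have hx := xplus_in.
have := tangent_lt fcvx xp y (fd xp) ltac:(lra_a) hy yx.
by rewrite derive1_f_xplus /Fa; lra_a.
Qed.

Lemma F_gt_min y : y != xp -> m < F y.
Proof.
move=> yx; have hx := xplus_in.
have [ya|ay] := lerP y a; have [ay'|ya'] := lerP (- a) y; last lra_a.
- by apply: F_gt_min_in => //; rewrite ay' ya.
- have := @F_gt_min_in (- a) ltac:(lra_a) (negbT (lt_eqF (andP hx).1)).
  rewrite F_Na (F_left y (ltW ya')).
  have : (1 + al) * a < - (1 + al) * y by rewrite mulNr -mulrN ltr_pM2l; lra_a.
  lra_a.
- have := @F_gt_min_in a ltac:(lra_a) (negbT (gt_eqF (andP hx).2)).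
  rewrite F_a (F_right y (ltW ay)).
  have : (1 - al) * a < (1 - al) * y by rewrite ltr_pM2l; lra_a.
  lra_a.
Qed.

Lemma F_ge_min s : m <= F s.
Proof. by have [->|/F_gt_min/ltW] := eqVneq s xp. Qed.

Lemma min_F_gt0 : 0 < m.
Proof.
have hx := xplus_in; have := @f_gt_abs xp hx; rewrite /Fa.
by case: (lerP 0 xp) => h; [rewrite ger0_norm | rewrite ltr0_norm]; nra_a.
Qed.

Lemma min_F_ge : (1 - al) * xp <= m /\ - (1 + al) * xp <= m.
Proof.
have := f_ge_abs xp; rewrite /Fa => h.
have h1 := ler_norm xp; have h2 : - xp <= `|xp| by rewrite -normrN ler_norm.
by split; nra_a.
Qed.

Lemma F_lt_right_in y z : xp <= y -> y < z -> z <= a -> F y < F z.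
Proof.
move=> xy yz za; have hx := xplus_in.
apply: (convex_lt_right (strictly_convex_on_subr_linear fcvx al) xp) => //; first lra_a.
by apply: F_gt_min; rewrite gt_eqF //; lra_a.
Qed.

Lemma F_lt_right y z : xp <= y -> y < z -> F y < F z.
Proof.
move=> xy yz; have hx := xplus_in.
have [za|az] := lerP z a; first exact: F_lt_right_in.
rewrite (F_right z (ltW az)); have [ay|ya] := lerP a y.
  by rewrite F_right // ltr_pM2l; lra_a.
have := F_lt_right_in y a xy ya (lexx a); rewrite F_a.
have : (1 - al) * a < (1 - al) * z by rewrite ltr_pM2l; lra_a.
lra_a.
Qed.

Lemma F_lt_left_in y z : - a <= y -> y < z -> z <= xp -> F z < F y.
Proof.
move=> ay yz zx; have hx := xplus_in.
apply: (convex_lt_left (strictly_convex_on_subr_linear fcvx al) xp) => //; first lra_a.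
by apply: F_gt_min; rewrite lt_eqF //; lra_a.
Qed.

Lemma F_lt_left y z : y < z -> z <= xp -> F z < F y.
Proof.
move=> yz zx; have hx := xplus_in.
have [ay|ya] := lerP (- a) y; first exact: F_lt_left_in.
rewrite (F_left y (ltW ya)); have [za|az] := lerP z (- a).
  by rewrite F_left // !mulNr ltrN2 ltr_pM2l; lra_a.
have := F_lt_left_in (- a) z (lexx _) az zx; rewrite F_Na.
have : (1 + al) * a < - (1 + al) * y by rewrite mulNr -mulrN ltr_pM2l; lra_a.
lra_a.
Qed.

Lemma F_le_left u1 u2 : u1 <= xp -> u2 <= xp -> (F u1 <= F u2) = (u2 <= u1).
Proof.
move=> h1 h2; have [u21|u12|->] := ltgtP u2 u1; last exact: lexx.
- exact/ltW/F_lt_left.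
- by apply/negbTE; rewrite -ltNge; apply: F_lt_left.
Qed.

Lemma F_le_right w1 w2 : xp <= w1 -> xp <= w2 -> (F w1 <= F w2) = (w1 <= w2).
Proof.
move=> h1 h2; have [w12|w21|->] := ltgtP w1 w2; last exact: lexx.
- exact/ltW/F_lt_right.
- by apply/negbTE; rewrite -ltNge; apply: F_lt_right.
Qed.

Local Notation W := (Finv a al f).

Definition Finv_left c := xget 0 [set u | u <= xplus a al f /\ Fa al f u = c].
Local Notation U := Finv_left.

Lemma Finv_eq c z : xp <= z -> F z = c -> W c = z.
Proof.
move=> xz Fz; apply: xget_unique => // y [xy Fy]; apply/eqP.
have [yz|zy|] // := ltgtP y z.
- by have := F_lt_right y z xy yz; lra_a.
- by have := F_lt_right z y xz zy; lra_a.
Qed.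

Lemma Finv_left_eq c u : u <= xp -> F u = c -> U c = u.
Proof.
move=> ux Fu; apply: xget_unique => // y [yx Fy]; apply/eqP.
have [yu|uy|] // := ltgtP y u.
- by have := F_lt_left y u yu ux; lra_a.
- by have := F_lt_left u y uy yx; lra_a.
Qed.

Lemma Finv_spec c : m <= c -> xp <= W c /\ F (W c) = c.
Proof.
move=> mc; have hm := min_F_gt0; have hx := xplus_in.
set b := a + c / (1 - al).
have ab : a <= b by rewrite /b lerDl divr_ge0 //; lra_a.
have Fb : F b = (1 - al) * a + c by rewrite F_right // /b; field; lra_a.
have [w + Fw] : exists2 w, w \in `[xp, b] & F w = c.
  apply: IVT; [lra_a | exact: continuous_subspaceT F_cont |].
  by rewrite Fb ge_min le_max; nra_a.
by rewrite in_itv /= => /andP[xw _]; rewrite (Finv_eq c w xw Fw).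
Qed.

Lemma Finv_left_spec c : m <= c -> U c <= xp /\ F (U c) = c.
Proof.
move=> mc; have hm := min_F_gt0; have hx := xplus_in.
set b := - a - c / (1 + al).
have ba : b <= - a by rewrite /b lerBlDr lerDl divr_ge0 //; lra_a.
have Fb : F b = (1 + al) * a + c by rewrite F_left // /b; field; lra_a.
have [u + Fu] : exists2 u, u \in `[b, xp] & F u = c.
  apply: IVT; [lra_a | exact: continuous_subspaceT F_cont |].
  by rewrite Fb ge_min le_max; nra_a.
by rewrite in_itv /= => /andP[_ ux]; rewrite (Finv_left_eq c u ux Fu).
Qed.

Lemma Finv_min : W m = xp.
Proof. exact: Finv_eq. Qed.

Lemma Finv_le c1 c2 : m <= c1 -> c1 <= c2 -> W c1 <= W c2.
Proof.
move=> m1 c12; have [x1 F1] := Finv_spec c1 m1.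
have [x2 F2] := Finv_spec c2 (le_trans m1 c12).
by rewrite -F_le_right // F1 F2.
Qed.

Lemma Finv_sub_ge c1 c2 : m <= c2 -> c2 <= c1 ->
  (1 - al)^-1 * (c1 - c2) <= W c1 - W c2.
Proof.
move=> m2 c21; have m1 := le_trans m2 c21; have hx := xplus_in.
have [x1 F1] := Finv_spec c1 m1; have [x2 F2] := Finv_spec c2 m2.
rewrite mulrC ler_pdivrMr; last lra_a.
have [w21|w12|w12] := ltgtP (W c2) (W c1).
- have := f_sub_le (W c2) (W c1) ltac:(lra_a) w21.
  move: F1 F2; rewrite /Fa => F1 F2.
  have : al * W c1 - al * W c2 = al * (W c1 - W c2) by ring.
  nra_a.
- by have := Finv_le c2 c1 m2 c21; lra_a.
- by rewrite -F1 -F2 w12 !subrr mul0r.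
Qed.

Lemma Finv_le_div c : m <= c -> W c <= (1 - al)^-1 * c.
Proof.
move=> mc; have [h1 h2] := Finv_spec c mc; have [mg1 mg2] := min_F_ge.
have xz : xp <= (1 - al)^-1 * c by rewrite ler_pdivlMl; lra_a.
rewrite -F_le_right // h2 /Fa.
have := f_ge_abs ((1 - al)^-1 * c); have := ler_norm ((1 - al)^-1 * c).
have : (1 - al) * ((1 - al)^-1 * c) = c by field; lra_a.
nra_a.
Qed.

(* Clamping at m makes Finv nondecreasing on the whole line, so that its
   continuity follows from monotonicity and the absence of jumps. *)
Definition Finv_max c := Finv a al f (Num.max c (Fa al f (xplus a al f))).

Lemma Finv_max_le c1 c2 : c1 <= c2 -> Finv_max c1 <= Finv_max c2.
Proof.
move=> c12; apply: Finv_le; first by rewrite le_max lexx orbT.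
by rewrite ge_max !le_max c12 lexx /= orbT.
Qed.

Lemma Finv_max_low c : c <= m -> Finv_max c = xp.
Proof. by move=> cm; rewrite /Finv_max max_r // Finv_min. Qed.

Lemma Finv_max_high c : m <= c -> Finv_max c = W c.
Proof. by move=> mc; rewrite /Finv_max max_l. Qed.

Lemma Finv_max_spec c : xp <= Finv_max c /\ c <= F (Finv_max c).
Proof.
have [cm|mc] := lerP c m; first by rewrite Finv_max_low.
have [xw Fw] := Finv_spec c (ltW mc).
by rewrite Finv_max_high ?(ltW mc) // Fw.
Qed.

Lemma Finv_max_cont : continuous Finv_max.
Proof.
move=> c; apply: nondecreasing_continuous_at; first exact: Finv_max_le.
- move=> e e0; have [xw _] := Finv_max_spec c.
  have [wx|xw'] := lerP (Finv_max c - e / 2) xp.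
    by exists (c - 1); [lra | have [] := Finv_max_spec (c - 1); lra].
  have mc : m < c.
    by rewrite ltNge; apply/negP => cm; move: xw'; rewrite Finv_max_low //; lra.
  move: xw'; rewrite Finv_max_high ?(ltW mc) // => xw'.
  have [_ Fw] := Finv_spec c (ltW mc).
  exists (F (W c - e / 2)); first by rewrite -{2}Fw; apply: F_lt_right; lra.
  by rewrite Finv_max_high ?F_ge_min // (Finv_eq _ (W c - e / 2) _ erefl); lra.
- move=> e e0; have [xw Fw] := Finv_max_spec c.
  exists (F (Finv_max c + e / 2)).
    by apply: (le_lt_trans Fw); apply: F_lt_right; lra.
  by rewrite Finv_max_high ?F_ge_min // (Finv_eq _ (Finv_max c + e / 2) _ erefl); lra.
Qed.

Definition shift u := u + delta a al f u.

Lemma shiftE u : shift u = u + (1 - al)^-1 * F u - W (F u).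
Proof. by rewrite /shift /delta /phi addrA. Qed.

Lemma shift_cont : continuous shift.
Proof.
have -> : shift = (idfun + (cst ((1 - al)^-1) \* F)) - (Finv_max \o F).
  by apply: funext => u; rewrite shiftE -(Finv_max_high (F u)) ?F_ge_min.
move=> u; apply: continuousB; first apply: continuousD.
- exact: cvg_id.
- by apply: continuousM; [exact: cvg_cst | exact: F_cont].
- by apply: continuous_comp; [exact: F_cont | exact: Finv_max_cont].
Qed.

Lemma shift_sub_ge u1 u2 : u1 <= u2 -> u2 <= xp -> u2 - u1 <= shift u2 - shift u1.
Proof.
move=> u12 u2x.
have F21 : F u2 <= F u1 by rewrite F_le_left //; exact: le_trans u12 u2x.
have := Finv_sub_ge (F u1) (F u2) (F_ge_min u2) F21.
by rewrite !shiftE mulrBr; lra_a.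
Qed.

Lemma shift_lt u1 u2 : u1 < u2 -> u2 <= xp -> shift u1 < shift u2.
Proof. by move=> u12 u2x; have := shift_sub_ge u1 u2 (ltW u12) u2x; lra_a. Qed.

Lemma shift_left u : u <= - a -> shift u = u.
Proof.
move=> ua; rewrite shiftE F_left //; have hx := xplus_in.
set c := - (1 + al) * u.
have ac : a <= (1 - al)^-1 * c by rewrite ler_pdivlMl /c; nra_a.
rewrite (Finv_eq c ((1 - al)^-1 * c)); first lra_a; first lra_a.
by rewrite F_right //; field; lra_a.
Qed.

Local Notation sa := (salpha a al f).

Lemma shift_xplus : shift xp = sa.
Proof. by []. Qed.

Lemma salphaE : sa = (1 - al)^-1 * m.
Proof. by rewrite -shift_xplus shiftE Finv_min; ring. Qed.

Lemma salpha_gt0 : 0 < sa.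
Proof.
by rewrite salphaE; apply: mulr_gt0; [rewrite invr_gt0 subr_gt0 | exact: min_F_gt0].
Qed.

Local Notation tau' := (tau a al f).

Lemma tau_eq x t : t <= xp -> shift t = x -> tau' x = t.
Proof.
move=> tx St; apply: xget_unique => // y [yx]; rewrite -/(shift y) => Sy.
apply/eqP; have [yt|ty|] // := ltgtP y t.
- by have := shift_lt y t yt tx; lra_a.
- by have := shift_lt t y ty yx; lra_a.
Qed.

Lemma tau_spec x : x <= sa -> tau' x <= xp /\ shift (tau' x) = x.
Proof.
move=> xs; have hx := xplus_in.
suff [t tx St] : exists2 t, t <= xp & shift t = x by rewrite (tau_eq x t tx St).
have [xa|ax] := lerP x (- a); first by exists x; [lra_a | rewrite shift_left].
have [t + St] : exists2 t, t \in `[- a, xp] & shift t = x.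
  apply: IVT; [lra_a | exact: continuous_subspaceT shift_cont |].
  by rewrite shift_left ?lexx // shift_xplus ge_min le_max; lra_a.
by rewrite in_itv /= => /andP[_ tx]; exists t.
Qed.

Lemma tau_left x : x <= - a -> tau' x = x.
Proof. by move=> xa; apply: tau_eq; [have := xplus_in; lra_a | exact: shift_left]. Qed.

Lemma tau_salpha : tau' sa = xp.
Proof. exact: tau_eq. Qed.

Lemma tau_ge x : - a <= x -> x <= sa -> - a <= tau' x.
Proof.
move=> ax xs; have [tx St] := tau_spec x xs.
by rewrite leNgt; apply/negP => ta; move: St; rewrite shift_left; lra_a.
Qed.

Local Notation Sh := (Sh_fun a al f).

Lemma Sh_le x : x <= sa -> Sh x = al * x + F (tau' x).
Proof. by move=> xs; rewrite /Sh_fun xs. Qed.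

Lemma Sh_gt x : sa < x -> Sh x = x.
Proof. by move=> sx; rewrite /Sh_fun leNgt sx. Qed.

Lemma Sh_left x : x <= - a -> Sh x = `|x|.
Proof.
move=> xa; have hs := salpha_gt0; rewrite Sh_le; last lra_a.
by rewrite tau_left // /Fa f_left // ltr0_norm; lra_a.
Qed.

Lemma Sh_salpha : Sh sa = sa.
Proof.
rewrite Sh_le // tau_salpha.
have : (1 - al) * sa = m by rewrite salphaE; field; lra_a.
lra_a.
Qed.

Lemma Sh_gt_abs x : - a < x < sa -> `|x| < Sh x.
Proof.
move=> /andP[ax xs]; rewrite Sh_le; last lra_a.
have [tx St] := tau_spec x (ltW xs); set t := tau' x in tx St *.
have hx := xplus_in.
have at' : - a < t.
  by rewrite ltNge; apply/negP => ta; move: St; rewrite shift_left //; lra_a.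
have {}tx : t < xp.
  by rewrite lt_neqAle tx andbT; apply: contraTneq xs => tE; rewrite -St tE ltxx.
have mt := F_ge_min t; have wt := Finv_le_div (F t) mt.
move: St; rewrite shiftE => St.
have ft := @f_gt_abs t ltac:(lra_a).
have n1 := ler_norm t; have n2 : - t <= `|t| by rewrite -normrN ler_norm.
have e1 : (1 - al) * ((1 - al)^-1 * F t) = F t by field; lra_a.
have [xw _] := Finv_spec (F t) mt.
rewrite /Fa in e1 St wt mt *.
by case: (lerP 0 x) => x0; [rewrite ger0_norm | rewrite ltr0_norm]; nra_a.
Qed.

Lemma gr_fE : gr f = [set p | - a <= p.1 <= a /\ 0 <= p.2 /\ `|p.1| <= p.2 <= f p.1].
Proof.
apply: gr_itvE; first lra_a.
apply/seteqP; split => x /=; rewrite in_itv /=.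
- move=> fx; rewrite !ltNge; apply/andP; split; apply/negP => h; apply: fx; apply/f_eq_abs.
  + by left.
  + by right.
- by move=> /andP[ax xa] /f_eq_abs; lra_a.
Qed.

Lemma gr_ShE : gr Sh = [set p | - a <= p.1 <= sa /\ 0 <= p.2 /\ `|p.1| <= p.2 <= Sh p.1].
Proof.
have hs := salpha_gt0; apply: gr_itvE; first lra_a.
apply/seteqP; split => x /=; rewrite in_itv /=.
- move=> Sx; rewrite !ltNge; apply/andP; split; apply/negP => h; apply: Sx.
  + exact: Sh_left.
  + move: h; rewrite le_eqVlt => /orP[/eqP <-|sx]; first by rewrite Sh_salpha gtr0_norm.
    by rewrite Sh_gt // gtr0_norm //; lra_a.
- by move=> hx; have := Sh_gt_abs x hx; lra_a.
Qed.

(* The shaken segment on the line y = al x + c starts on D, at abscissa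
   -c / (1 + al), and ends at abscissa [shaken_end c]. *)
Definition shaken_end c :=
  if c <= Fa al f (xplus a al f) then (1 - al)^-1 * c else shift (Finv_left c).

Lemma shaken_end_le c : 0 <= c -> shaken_end c <= (1 - al)^-1 * c /\ shaken_end c <= sa.
Proof.
move=> c0; rewrite /shaken_end; case: ifPn => [cm|].
  by rewrite salphaE; split=> //; apply: ler_wpM2l => //; rewrite invr_ge0; lra_a.
rewrite -ltNge => mc.
have [ux Fu] := Finv_left_spec c (ltW mc); have [xw Fw] := Finv_spec c (ltW mc).
rewrite shiftE Fu; split; first lra_a.
by rewrite -shift_xplus; have := shift_sub_ge (U c) xp ux (lexx xp); rewrite !shiftE Fu; lra_a.
Qed.

Lemma le_shaken_end c x : m < c -> x <= sa -> (x <= shaken_end c) = (c <= F (tau' x)).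
Proof.
move=> mc xs; rewrite /shaken_end (leNgt c m) mc /=.
have [ux Fu] := Finv_left_spec c (ltW mc); have [tx St] := tau_spec x xs.
rewrite -[X in _ = (X <= _)]Fu F_le_left //; apply/idP/idP => h.
- by rewrite leNgt; apply/negP => /shift_lt /(_ tx); lra_a.
- by have := shift_sub_ge (tau' x) (U c) h ux; lra_a.
Qed.

Definition gr_section c x := - a <= x <= a /\ `|x| <= al * x + c /\ al * x + c <= f x.

Lemma gr_f_line c x : gr f (x, al * x + c) <-> gr_section c x.
Proof.
rewrite gr_fE /gr_section /=; split=> [[ax [_ /andP[]]] //|[ax [xc cf]]].
by do 2!split=> //; [exact: le_trans (normr_ge0 _) xc | rewrite xc cf].
Qed.

Lemma abs_le_line c x :
  `|x| <= al * x + c <-> - ((1 + al)^-1 * c) <= x /\ x <= (1 - al)^-1 * c.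
Proof.
by rewrite ler_norml oppr_pinvM_le ?ler_pdivlMl; lra_a.
Qed.

Lemma mul_al_le_abs x : al * x <= `|x|.
Proof.
have : al * x <= al * `|x| by rewrite ler_wpM2l // ler_norm.
have : al * `|x| <= `|x| by rewrite ler_piMl //; lra_a.
lra_a.
Qed.

Lemma gr_section_out c x : c < 0 \/ (1 + al) * a < c -> ~ gr_section c x.
Proof.
move=> hc [/andP[ax xa] [xc cf]]; have hx := xplus_in.
case: hc => hc; first by have := mul_al_le_abs x; lra_a.
have cF : c <= F x by rewrite /Fa; lra_a.
have [xx|xx] := lerP x xp.
- have : F x <= F (- a) by rewrite F_le_left //; lra_a.
  rewrite F_Na; lra_a.
- have : F x <= F a by rewrite F_le_right //; lra_a.
  rewrite F_a; nra_a.
Qed.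

Lemma gr_section_low c : 0 <= c -> c <= m ->
  gr_section c = [set` `[- ((1 + al)^-1 * c), (1 - al)^-1 * c]].
Proof.
move=> c0 cm; have hx := xplus_in.
have := F_ge_min a; have := F_ge_min (- a); rewrite F_a F_Na => mNa ma.
have aA : - a <= - ((1 + al)^-1 * c) by rewrite ler_oppr_pinvM; lra_a.
have Ba : (1 - al)^-1 * c <= a by rewrite ler_pdivrMl; lra_a.
apply/seteqP; split=> x /=; rewrite in_itv /=.
- by move=> [_ [/abs_le_line [Ax xB] _]]; rewrite Ax xB.
- move=> /andP[Ax xB]; split; first lra_a.
  split; first exact/abs_le_line.
  by have := F_ge_min x; rewrite /Fa in cm *; lra_a.
Qed.

Lemma Finv_left_high_bounds c : m < c -> c <= (1 + al) * a ->
  - a <= U c /\ - ((1 + al)^-1 * c) <= U c /\ U c < xp.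
Proof.
move=> mc ca; have hx := xplus_in; have hm := min_F_gt0; have [mg1 mg2] := min_F_ge.
have [ux Fu] := Finv_left_spec c (ltW mc).
set A := - ((1 + al)^-1 * c).
have Ax : A <= xp by rewrite /A oppr_pinvM_le; lra_a.
split; first by rewrite -F_le_left ?Fu ?F_Na //; lra_a.
split; last by rewrite lt_neqAle ux andbT; apply/eqP => uE; move: Fu; rewrite uE; lra_a.
rewrite -F_le_left // Fu /Fa.
have cA : (1 + al) * ((1 + al)^-1 * c) = c by field; lra_a.
have A0 : 0 <= (1 + al)^-1 * c by rewrite mulr_ge0 ?invr_ge0; lra_a.
have := f_ge_abs A; rewrite /A normrN ger0_norm //; lra_a.
Qed.

Lemma gr_section_high c x : m < c -> c <= (1 + al) * a ->
  gr_section c x <-> [/\ - a <= x <= a, - ((1 + al)^-1 * c) <= x, x <= (1 - al)^-1 * c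
                       & x <= U c \/ W c <= x].
Proof.
move=> mc ca; have hx := xplus_in.
have [ux Fu] := Finv_left_spec c (ltW mc); have [xw Fw] := Finv_spec c (ltW mc).
have cF y : (c <= F y) = (al * y + c <= f y) by rewrite /Fa; apply/idP/idP; lra_a.
rewrite /gr_section; split.
- move=> [ax [/abs_le_line [Ax xB]]]; rewrite -cF => cx; split=> //.
  have [xx|xx] := lerP x xp; [left | right].
  + by rewrite -F_le_left // Fu.
  + by rewrite -F_le_right ?Fw //; lra_a.
- move=> [ax Ax xB xUW]; split=> //; split; first exact/abs_le_line.
  rewrite -cF; case: xUW => h.
  + by rewrite -[X in X <= _]Fu F_le_left //; lra_a.
  + by rewrite -[X in X <= _]Fw F_le_right //; lra_a.
Qed.

Lemma gr_section_high_in c : m < c -> c <= (1 + al) * a -> W c <= a ->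
  gr_section c = [set` `[- ((1 + al)^-1 * c), U c]] `|` [set` `[W c, (1 - al)^-1 * c]].
Proof.
move=> mc ca wa; have hx := xplus_in; have [mg1 _] := min_F_ge.
have [aU [AU Ux]] := Finv_left_high_bounds c mc ca.
have [xw Fw] := Finv_spec c (ltW mc).
have Ba : (1 - al)^-1 * c <= a.
  by have := F_le_right (W c) a xw ltac:(lra_a); rewrite Fw F_a wa ler_pdivrMl; lra_a.
have xB : xp <= (1 - al)^-1 * c by rewrite ler_pdivlMl; lra_a.
have aA : - a <= - ((1 + al)^-1 * c) by rewrite ler_oppr_pinvM; lra_a.
apply/seteqP; split=> y /=; rewrite !in_itv /=.
- by move=> /(gr_section_high c y mc ca) [ay Ay yB [yU|wy]]; [left | right]; lra_a.
- by case=> /andP[h1 h2]; apply/(gr_section_high c y mc ca); split; lra_a.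
Qed.

Lemma gr_section_high_out c : m < c -> c <= (1 + al) * a -> a < W c ->
  gr_section c = [set` `[- ((1 + al)^-1 * c), U c]].
Proof.
move=> mc ca aw; have hx := xplus_in; have [mg1 _] := min_F_ge.
have xB : xp <= (1 - al)^-1 * c by rewrite ler_pdivlMl; lra_a.
have aA : - a <= - ((1 + al)^-1 * c) by rewrite ler_oppr_pinvM; lra_a.
have [aU [AU Ux]] := Finv_left_high_bounds c mc ca.
have [xw Fw] := Finv_spec c (ltW mc).
apply/seteqP; split=> y /=; rewrite !in_itv /=.
- by move=> /(gr_section_high c y mc ca) [ay Ay yB [yU|wy]]; lra_a.
- by move=> /andP[Ay yU]; apply/(gr_section_high c y mc ca); split; lra_a.
Qed.

Local Notation k := (Num.sqrt (1 + al ^+ 2)).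

Lemma k_gt0 : 0 < k.
Proof. by rewrite sqrtr_gt0; have := sqr_ge0 al; lra_a. Qed.

(* The line through (p1, -p1) in D directed by [v_alpha al] is
   y = al x - (1 + al) p1, with arc length s = k (x - p1). *)
Lemma pt_line_D p1 s : pt_line (p1, - p1) (v_alpha al) s =
  (p1 + s / k, al * (p1 + s / k) + - (1 + al) * p1).
Proof. by rewrite /pt_line /v_alpha /=; congr (_, _); ring. Qed.

Lemma line_gr_f p1 : [set s | gr f (pt_line (p1, - p1) (v_alpha al) s)] =
  [set s | gr_section (- (1 + al) * p1) (p1 + s / k)].
Proof. by apply/seteqP; split=> s /=; rewrite pt_line_D => /gr_f_line. Qed.

Lemma line_measure_gr p1 : 0 <= - (1 + al) * p1 <= (1 + al) * a ->
  line_measure (gr f) (p1, - p1) (v_alpha al) = k * (shaken_end (- (1 + al) * p1) - p1).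
Proof.
set c := - (1 + al) * p1 => /andP[c0 ca]; have kp := k_gt0; have hx := xplus_in.
have Ap : - ((1 + al)^-1 * c) = p1 by rewrite /c; field; lra_a.
rewrite /line_measure line_gr_f -/c.
have [cm|mc] := lerP c m.
  rewrite gr_section_low // preimage_affine_itvcc // lebesgue_measure_itvcc /=.
    by rewrite /shaken_end cm Ap subrr mulr0 subr0 mulrBr.
  rewrite ler_pM2l // lerD2r Ap ler_pdivlMl; last lra_a.
  by rewrite /c in c0 *; nra_a.
have [ux Fu] := Finv_left_spec c (ltW mc); have [xw Fw] := Finv_spec c (ltW mc).
have [aU [AU Ux]] := Finv_left_high_bounds c mc ca; rewrite Ap in AU.
have endE : shaken_end c = U c + (1 - al)^-1 * c - W c.
  by rewrite /shaken_end leNgt mc /= shiftE Fu.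
have [wa|aw] := lerP (W c) a.
  rewrite gr_section_high_in // Ap preimage_affine_itvcc_setU //.
  rewrite lebesgue_measure_itvcc_setU /=; first by rewrite endE; ring.
  - by rewrite ler_pM2l // lerD2r.
  - by rewrite ltr_pM2l // ltrD2r; lra_a.
  - by rewrite ler_pM2l // lerD2r Finv_le_div // ltW.
have wB : W c = (1 - al)^-1 * c.
  have al1' : 1 - al != 0 by rewrite subr_eq0 eq_sym (lt_eqF al1).
  by rewrite -[X in _ * X]Fw F_right ?(ltW aw) // mulKf.
rewrite gr_section_high_out // Ap preimage_affine_itvcc // lebesgue_measure_itvcc /=.
  by rewrite endE wB; ring.
by rewrite ler_pM2l // lerD2r.
Qed.

Lemma line_meets_gr p1 : (exists s, gr f (pt_line (p1, - p1) (v_alpha al) s)) <->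
  0 <= - (1 + al) * p1 <= (1 + al) * a.
Proof.
set c := - (1 + al) * p1; split.
- move=> [s]; rewrite pt_line_D -/c => /gr_f_line sec.
  by apply/andP; split; rewrite leNgt; apply/negP => h; apply: (gr_section_out c _ _ sec);
    [left | right].
- move=> /andP[c0 ca]; exists 0; rewrite pt_line_D -/c mul0r addr0; apply/gr_f_line.
  have p0 : p1 <= 0 by rewrite /c in c0; nra_a.
  have ap : - a <= p1 by rewrite /c in ca; nra_a.
  rewrite /gr_section (_ : al * p1 + c = - p1); last by rewrite /c; ring.
  by rewrite ler0_norm // lexx; split; [lra_a | split=> //; rewrite -ler0_norm ?f_ge_abs].
Qed.

Lemma Sh_set_gr_line x c : Sh_set al (gr f) (x, al * x + c) <->
  0 <= c <= (1 + al) * a /\ - ((1 + al)^-1 * c) <= x <= shaken_end c.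
Proof.
have kp := k_gt0; split.
- move=> [[p1 q]]; rewrite /D_line /= => ->; rewrite /Kp; case: asboolP => [meets|//].
  move=> [s /andP[s0 sL]]; rewrite pt_line_D => -[xE cE].
  have cp : c = - (1 + al) * p1 by move: cE; rewrite -xE; lra_a.
  have Ap : - ((1 + al)^-1 * c) = p1 by rewrite cp; field; lra_a.
  have cI := (line_meets_gr p1).1 meets; rewrite -cp in cI.
  rewrite line_measure_gr -?cp // in sL.
  split=> //; rewrite Ap xE; apply/andP; split.
  + by rewrite lerDl divr_ge0 // ltW.
  + by rewrite -lerBrDl ler_pdivrMr // mulrC.
- move=> [cI /andP[Ax xE]]; set p1 := - ((1 + al)^-1 * c).
  have cp : - (1 + al) * p1 = c by rewrite /p1; field; lra_a.
  exists (p1, - p1) => //; rewrite /Kp; case: asboolP => [_|]; last first.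
    by move=> nmeets; exfalso; apply/nmeets/line_meets_gr; rewrite cp.
  have xk : p1 + k * (x - p1) / k = x by field; rewrite gt_eqF.
  exists (k * (x - p1)); last by rewrite pt_line_D cp xk.
  rewrite mulr_ge0 ?subr_ge0 ?(ltW kp) //=.
  by rewrite line_measure_gr cp // ler_pM2l // lerD2r.
Qed.

Lemma shaken_line_gr_Sh x c : 0 <= c <= (1 + al) * a ->
  - ((1 + al)^-1 * c) <= x <= shaken_end c -> gr Sh (x, al * x + c).
Proof.
move=> /andP[c0 ca] /andP[Ax xE]; rewrite gr_ShE /=.
have [Eb Es] := shaken_end_le c c0.
move: Ax; rewrite oppr_pinvM_le => [Ax|]; last lra_a.
have xB := le_trans xE Eb; move: xB; rewrite ler_pdivlMl => [xB|]; last lra_a.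
have ax : - a <= x.
  have : 0 <= (1 + al) * (x + a) by lra_a.
  by rewrite pmulr_rge0; lra_a.
have n1 := ler_norm x; have n2 : - x <= `|x| by rewrite -normrN ler_norm.
have xc : `|x| <= al * x + c.
  by case: (lerP 0 x) => x0; [rewrite ger0_norm | rewrite ltr0_norm]; lra_a.
split; first by have := le_trans xE Es; lra_a.
split; first exact: le_trans (normr_ge0 _) xc.
rewrite xc Sh_le /=; last exact: le_trans xE Es.
suff : c <= F (tau' x) by rewrite /Fa; lra_a.
have [cm|mc] := lerP c m; first exact: le_trans cm (F_ge_min _).
by rewrite -le_shaken_end // (le_trans xE Es).
Qed.

Lemma gr_Sh_shaken_line x c : gr Sh (x, al * x + c) ->
  0 <= c <= (1 + al) * a /\ - ((1 + al)^-1 * c) <= x <= shaken_end c.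
Proof.
rewrite gr_ShE /= => -[/andP[ax xs] [_ /andP[xc]]]; rewrite Sh_le // => cF.
have {}cF : c <= F (tau' x) by lra_a.
have [tx St] := tau_spec x xs; have at' := tau_ge x ax xs.
have Fa : F (tau' x) <= (1 + al) * a by rewrite -F_Na F_le_left //; have := xplus_in; lra_a.
have c0 : 0 <= c by have := mul_al_le_abs x; lra_a.
split; first lra_a.
rewrite oppr_pinvM_le; last lra_a.
apply/andP; split; first by move: xc; rewrite ler_norml; lra_a.
have [cm|mc] := lerP c m; last by rewrite le_shaken_end.
by rewrite /shaken_end cm ler_pdivlMl; [move: xc; rewrite ler_norml|]; lra_a.
Qed.

Lemma Sh_set_gr_f : Sh_set al (gr f) = gr Sh.
Proof.
apply/seteqP; split=> -[x y]; have -> : y = al * x + (y - al * x) by ring.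
- by move=> /Sh_set_gr_line[cI xI]; apply: shaken_line_gr_Sh.
- by move=> /gr_Sh_shaken_line /Sh_set_gr_line.
Qed.

End ShakingGraph.

Theorem theorem4p7 (R : realType) (a alpha : R) (f : R -> R) :
  0 < a -> 0 <= alpha < 1 -> in_Ca a f ->
  Sh_set alpha (gr f) = gr (Sh_fun a alpha f).
Proof.
move=> a0 /andP[al0 al1] [fd [fdc [_ [fout fcvx]]]].
exact: Sh_set_gr_f.
Qed.
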